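(* Let $n\ge1$, $N=2^n$, and let $S_m^*$ ($0\le m\le n-1$) be the maps defined below. For a finitely supported $H:\{0,1\}^n\times\{0,1\}^n\times\mathbb{Z}\to\mathbb{R}$, regarded as a function on $\{0,1\}^n\times\{0,1\}^0\times\{0,1\}^n\times\{0,1\}^0\times\mathbb{Z}$, the function $P=S_0^*\circ S_1^*\circ\cdots\circ S_{n-1}^*(H)$ on $\{0,1\}^0\times\{0,1\}^n\times\{0,1\}^0\times\{0,1\}^n\times\mathbb{Z}$ satisfies, for all $\mathbf v_1,\mathbf v_2\in\{0,1\}^n$ and $e\in\mathbb{Z}$, $$P(\emptyset\mid\mathbf v_1\mid\emptyset\mid\mathbf v_2\mid e)=\sum_{\mathbf s_1\in\{0,1\}^n}\sum_{\mathbf s_2\in\{0,1\}^n}H\big(\mathbf s_1\mid\mathbf s_2\mid e-l^n_{\lambda(\mathbf s_1)}(\mathbf v_1)-l^n_{\lambda(\mathbf s_2)}(\mathbf v_2)\big).$$ Equivalently, $(x,y,z)\mapsto P(\emptyset\mid\lambda^{-1}(x)\mid\emptyset\mid\lambda^{-1}(y)\mid z)$ is the adjoint of the linear map $f\mapsto\tilde f$, $\tilde f(\mathbf s_1\mid\mathbf s_2\mid d)=\sum_{\mathbf u_1,\mathbf u_2\in\{0,1\}^n}f\big(\lambda(\mathbf u_1),\lambda(\mathbf u_2),l^n_{\lambda(\mathbf s_1)}(\mathbf u_1)+l^n_{\lambda(\mathbf s_2)}(\mathbf u_2)+d\big)$ (the 3D discrete Radon transform of planes), acting on finitely supported $f: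\{0,\dots,N-1\}^2\times\mathbb{Z}\to\mathbb{R}$.
   Context: Bit vectors: for $\mathbf u=(u_0,\dots,u_{k-1})\in\{0,1\}^k$, $\lambda(\mathbf u)=\sum_{i=0}^{k-1}u_i2^i$ (first entry least significant), $\lambda(\emptyset)=0$; $(a,\boldsymbol\sigma)$ denotes the vector with first entry $a$ followed by the entries of $\boldsymbol\sigma$. Discrete lines: $l^0_s(\emptyset)=0$ and $l^k_s(u_0,\dots,u_{k-1})=l^{k-1}_{\lfloor s/2\rfloor}(u_0,\dots,u_{k-2})+u_{k-1}\lfloor(s+1)/2\rfloor$ for $k\ge1$, $s\ge0$. For $0\le m\le n-1$ and finitely supported $H$ on $\{0,1\}^{m+1}\times\{0,1\}^{n-m-1}\times\{0,1\}^{m+1}\times\{0,1\}^{n-m-1}\times\mathbb{Z}$, $S_m^*H$ is the function on $\{0,1\}^{m}\times\{0,1\}^{n-m}\times\{0,1\}^{m}\times\{0,1\}^{n-m}\times\mathbb{Z}$ given by $(S_m^*H)(\boldsymbol\sigma_1\mid(w_1,\mathbf v_1)\mid\boldsymbol\sigma_2\mid(w_2,\mathbf v_2)\mid d)=\sum_{a,b\in\{0,1\}}H((a,\boldsymbol\sigma_1)\mid\mathbf v_1\mid(b,\boldsymbol\sigma_2)\mid\mathbf v_2\mid d-w_1(a+\lambda(\boldsymbol\sigma_1))-w_2(b+\lambda(\boldsymbol\sigma_2)))$. *)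

From mathcomp Require Import all_boot all_order all_algebra.
From mathcomp Require Import reals.
Set Implicit Arguments. Unset Strict Implicit. Unset Printing Implicit Defensive.
Import Order.TTheory GRing.Theory Num.Theory.
Local Open Scope ring_scope.

(* Bit vectors are sequences of booleans; first entry least significant. *)
Fixpoint lam (u : seq bool) : nat :=
  match u with [::] => 0%N | b :: r => (b + 2 * lam r)%N end.

(* Auxiliary: discrete line evaluated on the reversed vector
   (last entry of the original vector first). *)
Fixpoint lineRev (s : nat) (ur : seq bool) : nat :=
  match ur with
  | [::] => 0%N
  | x :: r => (lineRev (s %/ 2) r + x * ((s + 1) %/ 2))%N
  end.

(* l^k_s(u_0,...,u_{k-1}) with k = size u:
   l^0_s() = 0, l^k_s(u) = l^{k-1}_{floor(s/2)}(u_0..u_{k-2}) + u_{k-1} floor((s+1)/2). *)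
Definition line (s : nat) (u : seq bool) : nat := lineRev s (rev u).

(* Functions on {0,1}^p x {0,1}^q x {0,1}^p x {0,1}^q x Z, encoded with
   sequence arguments (values outside the intended lengths are irrelevant). *)
Definition fn5 (R : Type) := seq bool -> seq bool -> seq bool -> seq bool -> int -> R.

(* S_m^* (for ambient n): maps functions on the (m+1, n-m-1) domain to
   functions on the (m, n-m) domain; set to 0 outside the (m, n-m) domain. *)
Definition Sstar (R : nmodType) (n m : nat) (H : fn5 R) : fn5 R :=
  fun s1 x1 s2 x2 d =>
    match x1, x2 with
    | w1 :: v1, w2 :: v2 =>
      if [&& size s1 == m, size s2 == m, size x1 == (n - m)%N
           & size x2 == (n - m)%N] then
        \sum_(a : bool) \sum_(b : bool)
          H (a :: s1) v1 (b :: s2) v2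
            (d - (w1 * (a + lam s1))%N%:Z - (w2 * (b + lam s2))%N%:Z)
      else 0
    | _, _ => 0
    end.

Definition Scomp (R : nmodType) (n : nat) (H : fn5 R) : fn5 R :=
  foldr (fun m G => Sstar n m G) H (iota 0 n).

Definition liftH (R : nmodType) (n : nat)
    (H : n.-tuple bool -> n.-tuple bool -> int -> R) : fn5 R :=
  fun s1 x1 s2 x2 d =>
    match insub s1 : option (n.-tuple bool), insub s2 : option (n.-tuple bool),
          x1, x2 with
    | Some t1, Some t2, [::], [::] => H t1 t2 d
    | _, _, _, _ => 0
    end.

(* Finite support in Z (the bit-vector coordinates range over finite sets). *)
Definition fin_supp (R : nmodType) (n : nat)
    (H : n.-tuple bool -> n.-tuple bool -> int -> R) : Prop :=
  exists M : nat, forall s1 s2 d, (M < `|d|)%N -> H s1 s2 d = 0.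

From mathcomp Require Import all_boot all_order all_algebra.
From mathcomp Require Import reals.
From mathcomp Require Import zify.
Import Order.TTheory GRing.Theory Num.Theory.
Local Open Scope ring_scope.

(* Unfolding S_{n-1}^*, ..., S_{n-k}^* one at a time, the bits a peeled off
   by each S_m^* are prepended to the bit vector s, and the shifts
   w (a + lam s) they introduce add up to the discrete line
   l_{lam (r ++ s)}(x) (lemma line_cons_cat).  After all n steps s is a full
   bit vector r and the accumulated shift is l_{lam r}(v). *)

Lemma lam_cat (u t : seq bool) : lam (u ++ t) = (lam u + 2 ^ size u * lam t)%N.
Proof. by elim: u => [|b u /= ->]; rewrite ?expnS /=; lia. Qed.

Lemma lam_ltn (u : seq bool) : (lam u < 2 ^ size u)%N.
Proof. by elim: u => //= b u IH; rewrite expnS; case: b => /=; lia. Qed.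

Lemma lineRev_rcons (s : nat) (u : seq bool) (w : bool) :
  lineRev s (rcons u w) = (lineRev s u + w * ((s %/ 2 ^ size u + 1) %/ 2))%N.
Proof.
elim: u s => [|y u IH] s /=; first by rewrite divn1.
by rewrite IH expnS divnMA; lia.
Qed.

Lemma line_cons (s : nat) (w : bool) (x : seq bool) :
  line s (w :: x) = (line s x + w * ((s %/ 2 ^ size x + 1) %/ 2))%N.
Proof. by rewrite /line rev_cons lineRev_rcons size_rev. Qed.

Lemma line_cons_cat (r s : seq bool) (a w : bool) (x : seq bool) :
  size r = size x ->
  line (lam (r ++ a :: s)) (w :: x) =
  (line (lam (r ++ a :: s)) x + w * (a + lam s))%N.
Proof.
move=> size_rx; rewrite line_cons; congr (_ + w * _)%N.
rewrite lam_cat -size_rx [(lam r + _)%N]addnC mulnC divnMDl ?expn_gt0 //.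
rewrite (divn_small (lam_ltn r)) addn0.
by case: a => /=; lia.
Qed.

Lemma big_tuple_rcons (R : nmodType) (k : nat) (F : k.+1.-tuple bool -> R) :
  \sum_(t : k.+1.-tuple bool) F t =
  \sum_(a : bool) \sum_(t : k.-tuple bool) F [tuple of rcons t a].
Proof.
rewrite exchange_big pair_big /=.
pose h (p : k.-tuple bool * bool) : k.+1.-tuple bool := [tuple of rcons p.1 p.2].
have h_inj : injective h.
  move=> [t a] [u b] /(congr1 val) /= /eqP.
  by rewrite eqseq_rcons => /andP[/eqP/val_inj -> /eqP ->].
have [g hK gK] : bijective h.
  by apply: (inj_card_bij h_inj); rewrite card_prod !card_tuple card_bool expnS mulnC.
by rewrite (reindex h) //; exists g => ? _; [apply: hK | apply: gK].
Qed.

Section PartialComposition.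
Variables (R : nmodType) (n : nat).

Definition Stail (k : nat) (G : fn5 R) : fn5 R :=
  foldr (fun m G' => Sstar n m G') G (iota (n - k) k).

Lemma Stail_S (k : nat) (G : fn5 R) : (k < n)%N ->
  Stail k.+1 G = Sstar n (n - k.+1) (Stail k G).
Proof. by move=> lt_kn; rewrite /Stail /= subnSK. Qed.

Lemma Scomp_Stail (G : fn5 R) : Scomp n G = Stail n G.
Proof. by rewrite /Stail subnn. Qed.

Lemma Stail_sum (G : fn5 R) (k : nat) : (k <= n)%N ->
  forall (s1 s2 x1 x2 : seq bool) (d : int),
  size s1 = (n - k)%N -> size s2 = (n - k)%N -> size x1 = k -> size x2 = k ->
  Stail k G s1 x1 s2 x2 d =
  \sum_(r1 : k.-tuple bool) \sum_(r2 : k.-tuple bool)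
     G (r1 ++ s1) [::] (r2 ++ s2) [::]
       (d - (line (lam (r1 ++ s1)) x1)%:Z - (line (lam (r2 ++ s2)) x2)%:Z).
Proof.
elim: k => [|k IH] le_kn s1 s2 x1 x2 d size_s1 size_s2.
  case: x1 => // _; case: x2 => // _.
  have sum_tuple0 (F : 0.-tuple bool -> R) : \sum_t F t = F [tuple].
    by rewrite (big_pred1 [tuple]) // => t; apply/esym/eqP; exact: tuple0.
  by rewrite !sum_tuple0 /= !subr0.
case: x1 => [|w1 x1] // [size_x1]; case: x2 => [|w2 x2] // [size_x2].
rewrite Stail_S // /Sstar size_s1 size_s2 /= size_x1 size_x2 subKn // !eqxx /=.
have size_cons (s : seq bool) (a : bool) :
    size s = (n - k.+1)%N -> size (a :: s) = (n - k)%N.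
  by move=> /= ->; rewrite subnSK.
rewrite big_tuple_rcons; apply: eq_bigr => a _.
under eq_bigr => b _ do
  rewrite IH ?(ltnW le_kn) ?size_cons //.
rewrite exchange_big; apply: eq_bigr => r1 _.
rewrite big_tuple_rcons; apply: eq_bigr => b _; apply: eq_bigr => r2 _.
rewrite !cat_rcons !line_cons_cat ?size_tuple //.
by congr (G _ _ _ _ _); rewrite !PoszD; lia.
Qed.

End PartialComposition.

Theorem mainTheorem5 (R : realType) (n : nat) (hn : (1 <= n)%N)
    (H : n.-tuple bool -> n.-tuple bool -> int -> R) :
  fin_supp H ->
  forall (v1 v2 : n.-tuple bool) (e : int),
    Scomp n (liftH H) [::] v1 [::] v2 e =
    \sum_(s1 : n.-tuple bool) \sum_(s2 : n.-tuple bool)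
       H s1 s2 (e - (line (lam s1) v1)%:Z - (line (lam s2) v2)%:Z).
Proof.
move=> _ v1 v2 e.
rewrite Scomp_Stail Stail_sum ?subnn ?size_tuple //.
apply: eq_bigr => s1 _; apply: eq_bigr => s2 _.
by rewrite !cats0 /liftH !valK.
Qed.
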